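(* Let $A$ be a finite set. Then every strongly irreducible subshift $X \subset A^{\mathbb Z}$ is a W-subshift.
   Context: A subshift of $A^{\mathbb Z}$ is a closed shift-invariant subset. $X$ is strongly irreducible if there is a finite $\Delta\subset\mathbb Z$ such that for all finite $\Omega_1,\Omega_2\subset\mathbb Z$ with $(\Omega_1-\Delta)\cap\Omega_2=\varnothing$ and all $x_1,x_2\in X$ there is $x\in X$ with $x|_{\Omega_1}=x_1|_{\Omega_1}$, $x|_{\Omega_2}=x_2|_{\Omega_2}$. $L(X)$ is the set of finite words (including the empty word) appearing as $x(i)\cdots x(j)$ in some $x\in X$; $|w|$ is word length. $X$ is a W-subshift if there is an integer $n_0\ge0$ such that for all $u,v\in L(X)$ there is $c\in L(X)$ with $|c|\le n_0$ and $ucv\in L(X)$. *)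

From Stdlib Require Import ZArith List FinFun.
Import ListNotations.
Open Scope Z_scope.

Definition config (A : Type) := Z -> A.

Definition cset (A : Type) := config A -> Prop.

Definition shift_invariant {A : Type} (X : cset A) : Prop :=
  forall (x : config A) (k : Z), X x -> X (fun n => x (n + k)).

(* Closedness in the prodiscrete (product of discrete) topology on A^Z:
   x lies in X as soon as every basic cylinder neighbourhood of x
   (agreement on a finite set of coordinates) meets X. *)
Definition closed_prodiscrete {A : Type} (X : cset A) : Prop :=
  forall x : config A,
    (forall F : list Z, exists y, X y /\ forall i, In i F -> y i = x i) ->
    X x.

Definition subshift {A : Type} (X : cset A) : Prop :=
  closed_prodiscrete X /\ shift_invariant X.

Definition strongly_irreducible {A : Type} (X : cset A) : Prop :=
  exists Delta : list Z,
    forall (Om1 Om2 : list Z),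
      (forall a d, In a Om1 -> In d Delta -> ~ In (a - d) Om2) ->
      forall x1 x2, X x1 -> X x2 ->
        exists x, X x /\ (forall i, In i Om1 -> x i = x1 i)
                      /\ (forall i, In i Om2 -> x i = x2 i).

Definition occurs_at {A : Type} (w : list A) (x : config A) (i : Z) : Prop :=
  forall k (d : A), (k < length w)%nat -> x (i + Z.of_nat k) = nth k w d.

(* The language L(X) (including the empty word when X is nonempty). *)
Definition language {A : Type} (X : cset A) (w : list A) : Prop :=
  exists x i, X x /\ occurs_at w x i.

Definition W_subshift {A : Type} (X : cset A) : Prop :=
  exists n0 : nat, forall u v : list A,
    language X u -> language X v ->
    exists c : list A, language X c /\ (length c <= n0)%nat /\
                       language X (u ++ c ++ v).

(* Place an occurrence of u at 0 and an occurrence of v at |u| + n0, where n0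
   bounds the displacements in the strong-irreducibility window Delta: the two
   position sets are then Delta-separated, so a single point of X agrees with
   both, and the word it carries between them is the connecting word c. *)

From Stdlib Require Import ZArith List FinFun Lia.

Definition window (n : nat) (a : Z) : list Z :=
  map (fun k => a + Z.of_nat k) (seq 0 n).

Lemma in_window n a z : In z (window n a) <-> a <= z < a + Z.of_nat n.
Proof.
  unfold window; rewrite in_map_iff; split.
  - intros [k [<- Hk]]; apply in_seq in Hk; lia.
  - intros Hz; exists (Z.to_nat (z - a)); split; [lia | apply in_seq; lia].
Qed.

Definition max_abs (D : list Z) : Z :=
  fold_right (fun d m => Z.max (Z.abs d) m) 0 D.

Lemma max_abs_ge_abs D d : In d D -> Z.abs d <= max_abs D.
Proof.
  induction D as [|e D IH]; simpl; [tauto|].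
  intros [<- | Hd]; [lia | specialize (IH Hd); lia].
Qed.

Lemma max_abs_nonneg D : 0 <= max_abs D.
Proof. induction D; simpl; lia. Qed.

Definition read {A : Type} (x : config A) (a : Z) (n : nat) : list A :=
  map (fun k => x (a + Z.of_nat k)) (seq 0 n).

Lemma length_read {A : Type} (x : config A) a n : length (read x a n) = n.
Proof. unfold read; now rewrite length_map, length_seq. Qed.

Lemma occurs_at_read {A : Type} (x : config A) a n : occurs_at (read x a n) x a.
Proof.
  intros k d Hk; rewrite length_read in Hk; unfold read.
  rewrite nth_indep with (d' := x (a + Z.of_nat 0)) by now rewrite length_map, length_seq.
  now rewrite (map_nth (fun k => x (a + Z.of_nat k))), seq_nth.
Qed.

Lemma occurs_at_shift {A : Type} (w : list A) (x : config A) i a :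
  occurs_at w x i -> occurs_at w (fun n => x (n + (i - a))) a.
Proof.
  intros Hw k d Hk; rewrite <- (Hw k d Hk); f_equal; lia.
Qed.

Lemma occurs_at_agree {A : Type} (w : list A) (x y : config A) i :
  occurs_at w y i -> (forall z, In z (window (length w) i) -> x z = y z) ->
  occurs_at w x i.
Proof.
  intros Hw Hxy k d Hk; rewrite Hxy by (apply in_window; lia); now apply Hw.
Qed.

Lemma occurs_at_app {A : Type} (u v : list A) (x : config A) i :
  occurs_at u x i -> occurs_at v x (i + Z.of_nat (length u)) ->
  occurs_at (u ++ v) x i.
Proof.
  intros Hu Hv k d Hk; rewrite length_app in Hk.
  destruct (Nat.lt_ge_cases k (length u)) as [Hlt | Hge].
  - rewrite app_nth1 by exact Hlt; now apply Hu.
  - rewrite app_nth2 by exact Hge.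
    rewrite <- (Hv (k - length u)%nat d) by lia; f_equal; lia.
Qed.

Definition gap (Delta : list Z) : nat := Z.to_nat (max_abs Delta).

Section Gluing.

Variables (A : Type) (X : cset A) (Delta : list Z).
Hypothesis X_shift : shift_invariant X.
Hypothesis X_glue : forall Om1 Om2 : list Z,
  (forall a d, In a Om1 -> In d Delta -> ~ In (a - d) Om2) ->
  forall x1 x2, X x1 -> X x2 ->
    exists x, X x /\ (forall i, In i Om1 -> x i = x1 i)
                  /\ (forall i, In i Om2 -> x i = x2 i).

Lemma glue_words (u v : list A) :
  language X u -> language X v ->
  exists x, X x /\ occurs_at u x 0
               /\ occurs_at v x (Z.of_nat (length u) + Z.of_nat (gap Delta)).
Proof.
  intros [x1 [i [X1 O1]]] [x2 [j [X2 O2]]].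
  set (p := Z.of_nat (length u) + Z.of_nat (gap Delta)).
  destruct (X_glue (window (length u) 0) (window (length v) p))
    with (x1 := fun n => x1 (n + (i - 0))) (x2 := fun n => x2 (n + (j - p)))
    as [x [Xx [E1 E2]]]; try now apply X_shift.
  - intros a d Ha Hd Had; apply in_window in Ha, Had.
    apply max_abs_ge_abs in Hd; pose proof (max_abs_nonneg Delta).
    unfold p, gap in Had; lia.
  - exists x; repeat split; [exact Xx | |];
      eapply occurs_at_agree; eauto using occurs_at_shift.
Qed.

End Gluing.

Arguments glue_words {A X Delta}.

Theorem proposition4p5 (A : Type) (HA : Finite A) (X : cset A) :
  subshift X -> strongly_irreducible X -> W_subshift X.
Proof.
  intros [_ X_shift] [Delta X_glue].
  exists (gap Delta); intros u v Lu Lv.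
  destruct (glue_words X_shift X_glue u v Lu Lv) as [x [Xx [Ou Ov]]].
  exists (read x (Z.of_nat (length u)) (gap Delta)); repeat split.
  - exists x, (Z.of_nat (length u)); split; [exact Xx | apply occurs_at_read].
  - now rewrite length_read.
  - exists x, 0; split; [exact Xx |].
    apply occurs_at_app; [exact Ou |].
    apply occurs_at_app; rewrite ?length_read; [apply occurs_at_read |].
    now rewrite <- Z.add_assoc.
Qed.
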